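(* Let $p,q$ be distinct primes, $n\geqslant1$, and let $S$ be a minimal generating set for a $C_{p^nq}$-transfer system. Let $T$, $B$ and $D$ be the numbers of top, bottom and diagonal arrows in $S$, respectively. Then: (1) $T+B\leqslant n$, and if $T+B=n$ then $\langle S\rangle$ contains the arrow $(0,0;n,0)$; (2) $T+D\leqslant n+1$, and if $T+D=n+1$ then $\langle S\rangle$ contains the arrow $(0,0;n,1)$; (3) $B+D\leqslant n+1$, and if $B+D=n+1$ then $\langle S\rangle$ contains the arrow $(0,0;n,0)$.
   Context: For a finite group $G$, an arrow is a pair $(H,K)$ of subgroups with $H\leqslant K$; identity arrows are those with $H=K$. A $G$-transfer system is a set of arrows containing all identities and closed under composition ($(H,K),(K,L)\Rightarrow(H,L)$), conjugation ($(H,K)\Rightarrow(gHg^{-1},gKg^{-1})$) and restriction ($(H,K)$ and $L\leqslant K\Rightarrow(H\cap L,L)$). For a set $S$ of non-identity arrows, $\langle S\rangle$ is the smallest transfer system containing $S$; $S$ is a minimal generating set of $\mathsf{T}$ if $\langle S\rangle=\mathsf{T}$ and $\langle S\setminus\{s\}\rangle\neq\mathsf{T}$ for all $s\in S$. In $C_{p^nq}$, $C_{p^aq^x}$ ($0\leqslant a\leqslant n$, $x\in\{0,1\}$) denotes the unique subgroup of order $p^aq^x$, and $(a,x;b,y)$ denotes the arrow $(C_{p^aq^x},C_{p^bq^y})$ (requiring $a\leqslant b$, $x\leqslant y$). Top arrows are those of the form $(i,1;j,1)$ with $i<j$; diagonal arrows are those of the form $(i,0;j,1)$ with $i\leqslant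 j$; bottom arrows are those of the form $(i,0;j,0)$ with $i<j$. *)

From mathcomp Require Import all_boot all_fingroup all_solvable.
Set Implicit Arguments. Unset Strict Implicit. Unset Printing Implicit Defensive.
Local Open Scope group_scope.

Section TransferSystems.
Variable gT : finGroupType.

(* An arrow is a pair (H, K) of subgroups; we store arbitrary pairs and
   require H <= K <= G where needed. *)
Definition arrow := ({group gT} * {group gT})%type.

Definition is_arrow (G : {group gT}) (a : arrow) : bool :=
  (a.1 \subset a.2) && (a.2 \subset G).

Definition is_identity (a : arrow) : bool := a.1 == a.2.

Definition transfer_system (G : {group gT}) (T : {set arrow}) : Prop :=
  [/\ (forall a, a \in T -> is_arrow G a),
      (forall H : {group gT}, H \subset G -> (H, H) \in T),
      (forall H K L : {group gT}, (H, K) \in T -> (K, L) \in T -> (H, L) \in T),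
      (forall (H K : {group gT}) (g : gT), (H, K) \in T -> g \in G ->
          ((H :^ g)%G, (K :^ g)%G) \in T) &
      (forall H K L : {group gT}, (H, K) \in T -> L \subset K ->
          ((H :&: L)%G, L) \in T)].

Definition generated (G : {group gT}) (S : {set arrow}) (a : arrow) : Prop :=
  forall T : {set arrow}, transfer_system G T -> S \subset T -> a \in T.

Definition minimal_generating_set (G : {group gT}) (S T : {set arrow}) : Prop :=
  [/\ (forall s, s \in S -> is_arrow G s && ~~ is_identity s),
      (forall a, generated G S a <-> a \in T) &
      (forall s, s \in S -> ~ (forall a, generated G (S :\ s) a <-> a \in T))].

(* Classification of arrows in C_{p^n q} according to whether q divides the
   orders of the source and target:  top = (i,1;j,1) with i<j,
   diagonal = (i,0;j,1), bottom = (i,0;j,0) with i<j. *)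
Definition top_arrow (q : nat) (a : arrow) : bool :=
  [&& q %| #|a.1|, q %| #|a.2| & a.1 != a.2].
Definition diagonal_arrow (q : nat) (a : arrow) : bool :=
  ~~ (q %| #|a.1|) && (q %| #|a.2|).
Definition bottom_arrow (q : nat) (a : arrow) : bool :=
  [&& ~~ (q %| #|a.1|), ~~ (q %| #|a.2|) & a.1 != a.2].

End TransferSystems.

From mathcomp Require Import all_boot all_fingroup all_solvable.
From mathcomp Require Import boolp zify.
Set Implicit Arguments. Unset Strict Implicit. Unset Printing Implicit Defensive.

(* Every subgroup of G is C_{p^a q^x} for a unique level a <= n and height
   x in {0,1}.  Fix two of the three arrow types, and a height y at or below
   the target of every counted arrow.  A counted arrow s of S with source level
   k is labelled by the least level r > k from which the target level of s is
   reached, at height y, through the arrows generated by the counted arrows of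
   S with source level > k; a diagonal arrow that these arrows do not imply is
   labelled n+1 instead.  Restricting s shows that its label is reached from
   level k, while minimality shows that it is not reached from level k+1, so
   arrows of different levels get different labels; two arrows of the same
   level with the same label would make one of them redundant.  Hence the
   labels inject the counted arrows into [1, n], or into [1, n+1] when diagonal
   arrows are counted.  If the bound is attained, every level in [1, n] is
   reached from a lower one, and chaining these steps from level 0 yields the
   arrow (0,0; n,y). *)

Section LeastAbove.
Variable R : nat -> Prop.

Lemma least_above_subproof k j : exists r, (r == j) || (k < r) && `[< R r >].
Proof. by exists j; rewrite eqxx. Qed.

Definition least_above k j : nat := ex_minn (least_above_subproof k j).

Lemma least_aboveP k j : k < j -> R j ->
  [/\ k < least_above k j, least_above k j <= j, R (least_above k j)
    & forall w, k < w < least_above k j -> ~ R w].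
Proof.
move=> lt_kj Rj; rewrite /least_above; case: ex_minnP => r Pr min_r.
have le_rj : r <= j by apply: min_r; rewrite eqxx.
have [lt_kr Rr] : k < r /\ R r by case/orP: Pr => [/eqP -> // | /andP[-> /asboolP]].
split=> // w /andP[lt_kw lt_wr] Rw.
by have := min_r w; rewrite lt_kw (asboolT Rw) orbT leqNgt lt_wr => /(_ isT).
Qed.

End LeastAbove.

Lemma card_sep_or (T : finType) (A : {set T}) (P1 P2 : pred T) :
  (forall x, P1 x -> ~~ P2 x) ->
  #|[set x in A | P1 x]| + #|[set x in A | P2 x]| = #|[set x in A | P1 x || P2 x]|.
Proof.
move=> P12; rewrite -cardsUI.
have -> : [set x in A | P1 x] :&: [set x in A | P2 x] = set0.
  apply/setP => x; rewrite !inE; case P1x: (P1 x); last by rewrite andbF.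
  by rewrite (negbTE (P12 x P1x)) !andbF.
by rewrite cards0 addn0; apply: eq_card => x; rewrite !inE andb_orr.
Qed.

Section TwoPrimes.
Variables p q : nat.
Hypotheses (p_pr : prime p) (q_pr : prime q) (pq_neq : p != q).

Let p_gt0 : 0 < p. Proof. exact: prime_gt0. Qed.
Let q_gt0 : 0 < q. Proof. exact: prime_gt0. Qed.

Lemma logn_pq (a : nat) (x : bool) : logn p (p ^ a * q ^ x) = a.
Proof.
rewrite lognM ?expn_gt0 ?p_gt0 ?q_gt0 // !lognX logn_prime // logn_prime //.
by rewrite eqxx (negbTE pq_neq) muln0 addn0 muln1.
Qed.

Lemma dvdn_q_pq (a : nat) (x : bool) : (q %| p ^ a * q ^ x) = x.
Proof.
case: x; first by rewrite expn1 dvdn_mull.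
rewrite muln1 Euclid_dvdX // dvdn_prime2 // eq_sym.
by rewrite (negbTE pq_neq).
Qed.

Lemma dvdn_pq a (x : bool) b (y : bool) :
  (p ^ a * q ^ x %| p ^ b * q ^ y) = (a <= b) && (x <= y).
Proof.
apply/idP/andP => [dv | [ab xy]]; last first.
  by apply: dvdn_mul; rewrite dvdn_exp2l.
split.
  rewrite -[a](logn_pq a x) -[b](logn_pq b y); apply: dvdn_leq_log dv.
  by rewrite muln_gt0 !expn_gt0 p_gt0 q_gt0.
case: x dv => // dv.
by rewrite -(dvdn_q_pq b y) (dvdn_trans _ dv) ?dvdn_q_pq.
Qed.

Lemma dvdn_pnq_eq n d : d %| p ^ n * q ->
  d = p ^ logn p d * q ^ (q %| d) /\ logn p d <= n.
Proof.
move=> dv_d; have pnq_gt0 : 0 < p ^ n * q by rewrite muln_gt0 expn_gt0 p_gt0.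
have d_gt0 : 0 < d := dvdn_gt0 pnq_gt0 dv_d.
have logn_pnq r : logn r (p ^ n * q) = n * (r == p) + (r == q).
  by rewrite lognM ?expn_gt0 ?p_gt0 // lognX !logn_prime.
split; last first.
  by have := dvdn_leq_log p pnq_gt0 dv_d; rewrite logn_pnq eqxx (negbTE pq_neq); lia.
apply: eqn_from_log => [//||r]; first by rewrite muln_gt0 !expn_gt0 p_gt0 q_gt0.
rewrite lognM ?expn_gt0 ?p_gt0 ?q_gt0 // !lognX (logn_prime r p_pr) (logn_prime r q_pr).
have := dvdn_leq_log r pnq_gt0 dv_d; rewrite logn_pnq.
case: (eqVneq r p) => [-> _|_]; first by rewrite (negbTE pq_neq) muln1 muln0 addn0.
case: (eqVneq r q) => [->|_]; last by rewrite !muln0; lia.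
rewrite !muln0 !muln1 add0n => le_q.
have: (0 < logn q d) = (q %| d) by rewrite logn_gt0 mem_primes q_pr d_gt0.
by case: (q %| d) => /=; lia.
Qed.

End TwoPrimes.

Local Open Scope group_scope.

Section Generated.
Variables (gT : finGroupType) (G : {group gT}).
Implicit Types (Y Z : {set arrow gT}) (H K L : {group gT}).

Lemma generated_mem Y a : a \in Y -> generated G Y a.
Proof. by move=> aY T _ /subsetP; apply. Qed.

Lemma generated_mono Y Z a : Y \subset Z -> generated G Y a -> generated G Z a.
Proof. by move=> sYZ genYa T tsT sZT; apply: genYa (subset_trans sYZ sZT). Qed.

Lemma generated_refl Y H : H \subset G -> generated G Y (H, H).
Proof. by move=> sHG T [_ idT _ _ _] _; apply: idT. Qed.

Lemma generated_trans Y H K L :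
  generated G Y (H, K) -> generated G Y (K, L) -> generated G Y (H, L).
Proof.
move=> genHK genKL T tsT sYT; have [_ _ compT _ _] := tsT.
exact: compT (genHK T tsT sYT) (genKL T tsT sYT).
Qed.

Lemma generated_restr Y H K L :
  generated G Y (H, K) -> L \subset K -> generated G Y ((H :&: L)%G, L).
Proof.
move=> genHK sLK T tsT sYT; have [_ _ _ _ resT] := tsT.
exact: resT (genHK T tsT sYT) sLK.
Qed.

Lemma minimal_generating_set_irredundant S T s :
  minimal_generating_set G S T -> s \in S -> ~ generated G (S :\ s) s.
Proof.
case=> _ genS minS sS gen_s; apply: (minS s sS) => a; rewrite -genS.
split; first exact/generated_mono/subsetDl.
move=> gen_a T' tsT' sT'; apply: (gen_a T' tsT'); apply/subsetP => t tS.
have [-> | nts] := eqVneq t s; first exact: gen_s T' tsT' sT'.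
by apply: (subsetP sT'); rewrite !inE nts.
Qed.

End Generated.

Section ArrowTypes.
Variables (gT : finGroupType) (q : nat).
Implicit Types (s : arrow gT) (P : pred (arrow gT)).

Definition heights s : bool * bool := (q %| #|s.1|, q %| #|s.2|).

(* [P] selects the counted arrow types, [y] is the height at which target
   levels are reached, and [hb] allows the extra label n+1 of diagonal arrows. *)
Definition admissible P (y hb : bool) : Prop :=
  [/\ forall s, P s -> y <= (q %| #|s.2|),
      forall s, P s -> diagonal_arrow q s -> hb
    & forall s s', P s -> P s' -> heights s != heights s' ->
        (heights s == (false, y)) || (heights s' == (false, y))].

Lemma top_bottom_admissible :
  admissible (fun s => top_arrow q s || bottom_arrow q s) false false.
Proof.
split=> [s|s|s s']; rewrite /top_arrow /bottom_arrow /diagonal_arrow /heights;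
  case: (q %| #|s.1|) (q %| #|s.2|) => [] [] //=.
all: by case: (q %| #|s'.1|) (q %| #|s'.2|) => [] [].
Qed.

Lemma top_diagonal_admissible :
  admissible (fun s => top_arrow q s || diagonal_arrow q s) true true.
Proof.
split=> [s|s|s s']; rewrite /top_arrow /bottom_arrow /diagonal_arrow /heights;
  case: (q %| #|s.1|) (q %| #|s.2|) => [] [] //=.
all: by case: (q %| #|s'.1|) (q %| #|s'.2|) => [] [].
Qed.

Lemma bottom_diagonal_admissible :
  admissible (fun s => bottom_arrow q s || diagonal_arrow q s) false true.
Proof.
split=> [s|s|s s']; rewrite /top_arrow /bottom_arrow /diagonal_arrow /heights;
  case: (q %| #|s.1|) (q %| #|s.2|) => [] [] //=.
all: by case: (q %| #|s'.1|) (q %| #|s'.2|) => [] [].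
Qed.

Lemma top_bottom_disjoint s : top_arrow q s -> ~~ bottom_arrow q s.
Proof. by rewrite /bottom_arrow; case/and3P=> ->. Qed.

Lemma top_diagonal_disjoint s : top_arrow q s -> ~~ diagonal_arrow q s.
Proof. by rewrite /diagonal_arrow; case/and3P=> ->. Qed.

Lemma bottom_diagonal_disjoint s : bottom_arrow q s -> ~~ diagonal_arrow q s.
Proof. by rewrite /diagonal_arrow; case/and3P=> _ /negbTE ->; rewrite andbF. Qed.

End ArrowTypes.

Section CyclicSubgroups.
Variables (gT : finGroupType) (G : {group gT}) (p q n : nat) (g : gT).
Hypotheses (p_pr : prime p) (q_pr : prime q) (pq_neq : p != q).
Hypotheses (oG : #|G| = (p ^ n * q)%N) (defG : G :=: <[g]>).

Definition Cpq (a : nat) (x : bool) : {group gT} :=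
  <[g ^+ (#|G| %/ (p ^ a * q ^ x))]>%G.

Let cycG : cyclic G. Proof. by rewrite defG cycle_cyclic. Qed.

Lemma Cpq_sub a x : Cpq a x \subset G.
Proof. by rewrite cycle_subG defG mem_cycle. Qed.

Let dvdn_pq_cardG a (x : bool) : a <= n -> (p ^ a * q ^ x %| #|G|)%N.
Proof.
by move=> le_an; rewrite oG -[(p ^ n * q)%N]/(p ^ n * q ^ true)%N dvdn_pq // le_an leq_b1.
Qed.

Lemma card_Cpq a x : a <= n -> #|Cpq a x| = (p ^ a * q ^ x)%N.
Proof.
move=> le_an; rewrite /= -orderE orderXdiv orderE -defG ?dvdn_div ?dvdn_pq_cardG //.
by rewrite divnA ?dvdn_pq_cardG // mulKn // cardG_gt0.
Qed.

Lemma logn_card_Cpq a x : a <= n -> logn p #|Cpq a x| = a.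
Proof. by move=> le_an; rewrite card_Cpq // logn_pq. Qed.

Lemma dvdn_q_card_Cpq a x : a <= n -> (q %| #|Cpq a x|) = x.
Proof. by move=> le_an; rewrite card_Cpq // dvdn_q_pq. Qed.

Lemma Cpq_subset a x b y : a <= n -> b <= n ->
  (Cpq a x \subset Cpq b y) = (a <= b) && (x <= y).
Proof.
by move=> le_an le_bn; rewrite -(cardSg_cyclic cycG) ?Cpq_sub // !card_Cpq // dvdn_pq.
Qed.

Lemma subgroup_Cpq (H : {group gT}) : H \subset G ->
  exists a x, a <= n /\ H = Cpq a x.
Proof.
move=> sHG; have dvH : (#|H| %| p ^ n * q)%N by rewrite -oG cardSg.
have [defH le_n] := dvdn_pnq_eq p_pr q_pr pq_neq dvH.
exists (logn p #|H|), (q %| #|H|); split=> //; apply/val_inj/eqP => /=.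
by rewrite (eq_subG_cyclic cycG) ?Cpq_sub // card_Cpq // -defH.
Qed.

Lemma Cpq_meet a x c z : a <= n -> c <= n ->
  (Cpq a x :&: Cpq c z)%G = Cpq (minn a c) (x && z).
Proof.
move=> le_an le_cn; have le_mn : minn a c <= n by rewrite geq_min le_an.
have sIG : Cpq a x :&: Cpq c z \subset G by rewrite subIset ?Cpq_sub.
have [b [y [le_bn defI]]] := subgroup_Cpq sIG; rewrite defI.
have [sIa sIc] : Cpq b y \subset Cpq a x /\ Cpq b y \subset Cpq c z.
  by apply/andP; rewrite -subsetI -defI.
have smI : Cpq (minn a c) (x && z) \subset Cpq b y.
  by rewrite -defI subsetI !Cpq_subset // geq_minl geq_minr; case: (x) (z) => [] [].
move: sIa sIc smI; rewrite !Cpq_subset // => /andP[ba yx] /andP[bc yz] /andP[mb xzy].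
congr Cpq; first lia.
by case: (x) (y) (z) yx yz xzy => [] [] [].
Qed.

Lemma Cpq1 : 1%G = Cpq 0 false.
Proof.
by apply/val_inj/eqP; rewrite (eq_subG_cyclic cycG) ?sub1G ?Cpq_sub // card_Cpq // cards1.
Qed.

Lemma CpqG : G = Cpq n true.
Proof.
by apply/val_inj/eqP; rewrite (eq_subG_cyclic cycG) ?Cpq_sub // card_Cpq // oG expn1.
Qed.

Lemma subgroup_pn_Cpq (P : {group gT}) : P \subset G -> #|P| = (p ^ n)%N -> P = Cpq n false.
Proof.
move=> sPG oP; apply/val_inj/eqP.
by rewrite (eq_subG_cyclic cycG) ?Cpq_sub // card_Cpq // oP muln1.
Qed.

Section IrredundantArrows.
Variable S : {set arrow gT}.
Hypothesis S_arrow : forall s, s \in S -> is_arrow G s && ~~ is_identity s.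
Hypothesis S_irr : forall s, s \in S -> ~ generated G (S :\ s) s.

Implicit Types (Y Z : {set arrow gT}) (s : arrow gT) (x z : bool).

Lemma generated_restr_Cpq Y a x b z c (w : bool) : a <= n -> c <= b -> b <= n -> w <= z ->
  generated G Y (Cpq a x, Cpq b z) -> generated G Y (Cpq (minn a c) (x && w), Cpq c w).
Proof.
move=> le_an le_cb le_bn le_wz gen_ab; rewrite -Cpq_meet ?(leq_trans le_cb) //.
by apply: generated_restr gen_ab _; rewrite Cpq_subset ?(leq_trans le_cb) ?le_cb.
Qed.

Lemma generated_restr_above Y a x b z c (w : bool) : a <= c -> c <= b -> b <= n -> w <= z ->
  generated G Y (Cpq a x, Cpq b z) -> generated G Y (Cpq a (x && w), Cpq c w).
Proof.
move=> le_ac le_cb le_bn le_wz /(generated_restr_Cpq _ le_cb le_bn le_wz).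
by rewrite (minn_idPl le_ac); apply; rewrite (leq_trans le_ac) ?(leq_trans le_cb).
Qed.

Definition diag_at Y u := generated G Y (Cpq u false, Cpq u true).

Lemma diag_at_restr Y u v w : w <= u -> u <= v -> v <= n ->
  generated G Y (Cpq u false, Cpq v true) -> diag_at Y w.
Proof.
move=> le_wu le_uv le_vn /(generated_restr_Cpq _ (leq_trans le_wu le_uv) le_vn (leqnn true)).
by rewrite (minn_idPr le_wu); apply; rewrite (leq_trans le_uv).
Qed.

Lemma S_coord s : s \in S -> exists k x j z,
  [/\ s = (Cpq k x, Cpq j z), k <= j <= n, x <= z & (k < j) || ~~ x && z].
Proof.
case: s => H K /S_arrow /andP[/andP[/= sHK sKG] /negP nid].
have [j [z [le_jn defK]]] := subgroup_Cpq sKG.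
have [k [x [le_kn defH]]] := subgroup_Cpq (subset_trans sHK sKG).
exists k, x, j, z; rewrite defH defK; move: sHK; rewrite defH defK Cpq_subset //.
case/andP=> le_kj le_xz; split=> //; first by rewrite le_kj.
rewrite ltn_neqAle le_kj andbT; apply/contraT; rewrite negb_or negbK => /andP[/eqP ekj xz].
by case: nid; rewrite /is_identity defH defK ekj; case: (x) (z) le_xz xz => [] [].
Qed.

Lemma same_source k x j j' z : (Cpq k x, Cpq j z) \in S -> (Cpq k x, Cpq j' z) \in S ->
  x <= z -> k <= j -> k <= j' -> j <= n -> j' <= n -> j = j'.
Proof.
move=> s1 s2 le_xz le_kj le_kj' le_jn le_jn'.
wlog lt_jj' : j j' s1 s2 le_kj le_kj' le_jn le_jn' / j < j'.
  by move=> hwlog; case: (ltngtP j j') => // lt; [exact: (hwlog j j') | exact/esym/(hwlog j' j)].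
have s2D : (Cpq k x, Cpq j' z) \in S :\ (Cpq k x, Cpq j z).
  rewrite !inE s2 andbT; apply: contraTneq lt_jj' => /(congr1 (fun s => logn p #|s.2|)).
  by rewrite !logn_card_Cpq // => ->; rewrite ltnn.
case: (S_irr s1).
have := generated_restr_above le_kj (ltnW lt_jj') le_jn' (leqnn z) (generated_mem s2D).
by have -> : x && z = x by case: (x) (z) le_xz => [] [].
Qed.

Definition level s := logn p #|s.1|.

Lemma level_Cpq k x j z : k <= n -> level (Cpq k x, Cpq j z) = k.
Proof. exact: logn_card_Cpq. Qed.

Section Counting.
Variables (P : pred (arrow gT)) (y hb : bool).
Hypothesis P_adm : admissible q P y hb.

Definition arrows_from k := [set s in S | P s & k <= level s].

Definition reach Y u v := exists2 x : bool, x <= y & generated G Y (Cpq u x, Cpq v y).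

(* The point n.+1 stands for a generated diagonal arrow. *)
Definition reached k v :=
  (v <= n /\ exists2 u, k <= u < v & reach (arrows_from k) u v)
  \/ (v = n.+1 /\ exists2 u, k <= u <= n & diag_at (arrows_from k) u).

Definition label s :=
  let k := level s in let j := logn p #|s.2| in
  if diagonal_arrow q s && ~~ `[< diag_at (arrows_from k.+1) k >] then n.+1
  else least_above (reach (arrows_from k.+1) ^~ j) k j.

Lemma arrows_from_sub k : arrows_from k \subset S.
Proof. by apply/subsetP => s; rewrite inE => /andP[]. Qed.

Lemma arrows_from_mono k k' : k <= k' -> arrows_from k' \subset arrows_from k.
Proof.
by move=> le_kk'; apply/subsetP => s; rewrite !inE => /and3P[-> -> /(leq_trans le_kk') ->].
Qed.

Lemma mem_arrows_from k x j z : (Cpq k x, Cpq j z) \in S -> P (Cpq k x, Cpq j z) -> k <= n ->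
  (Cpq k x, Cpq j z) \in arrows_from k.
Proof. by move=> sS Ps le_kn; rewrite inE; apply/and3P; rewrite level_Cpq. Qed.

Lemma arrows_from_succ_setD1 k x j z : k <= n -> arrows_from k.+1 \subset S :\ (Cpq k x, Cpq j z).
Proof.
move=> le_kn; apply/subsetP => s; rewrite !inE => /and3P[sS _ lt_ks].
by rewrite sS andbT; apply: contraTneq lt_ks => ->; rewrite level_Cpq // ltnn.
Qed.

Lemma reach_mono Y Z u v : Y \subset Z -> reach Y u v -> reach Z u v.
Proof. by move=> sYZ [x le_xy gen_uv]; exists x => //; apply: generated_mono gen_uv. Qed.

Lemma reach_refl Y u : reach Y u u.
Proof. by exists y => //; apply/generated_refl/Cpq_sub. Qed.

Lemma reach_comp Y u x r j : u <= r -> r <= j -> j <= n ->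
  generated G Y (Cpq u x, Cpq r y) -> reach Y r j ->
  exists2 x' : bool, x' <= x & generated G Y (Cpq u x', Cpq j y).
Proof.
move=> le_ur le_rj le_jn gen_ur [x' le_x'y gen_rj].
have [e_x'y | ne_x'y] := eqVneq x' y.
  by rewrite e_x'y in gen_rj; exists x => //; apply: generated_trans gen_ur gen_rj.
have [x'F yT] : x' = false /\ y = true by case: (x') (y) le_x'y ne_x'y => [] [].
exists false => //; apply: generated_trans (_ : generated G Y (Cpq r false, Cpq j y)).
  have le_jn' := leq_trans le_rj le_jn.
  by have := generated_restr_above le_ur (leqnn r) le_jn' (leq0n y : false <= y) gen_ur;
    rewrite andbF.
by rewrite -x'F.
Qed.

Lemma reach_trans Y u r j : u <= r -> r <= j -> j <= n ->
  reach Y u r -> reach Y r j -> reach Y u j.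
Proof.
move=> le_ur le_rj le_jn [x le_xy gen_ur] /(reach_comp le_ur le_rj le_jn gen_ur).
by case=> x' le_x'x gen_uj; exists x' => //; apply: leq_trans le_xy.
Qed.

Lemma reached_mono k k' v : k <= k' -> reached k' v -> reached k v.
Proof.
move=> le_kk' [[le_vn [u /andP[le_k'u lt_uv] reach_uv]] | [-> [u /andP[le_k'u le_un] diag_u]]].
  left; split=> //; exists u; first by rewrite (leq_trans le_kk').
  exact: reach_mono (arrows_from_mono le_kk') reach_uv.
right; split=> //; exists u; first by rewrite (leq_trans le_kk').
exact: generated_mono (arrows_from_mono le_kk') diag_u.
Qed.

Lemma reached_gt0 k v : reached k v -> 0 < v.
Proof. by case=> [[_ [u /andP[_ /(leq_ltn_trans (leq0n u))]]] | [->]]. Qed.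

Lemma label_Cpq k x j z : k <= n -> j <= n ->
  label (Cpq k x, Cpq j z) =
    if ~~ x && z && ~~ `[< diag_at (arrows_from k.+1) k >] then n.+1
    else least_above (reach (arrows_from k.+1) ^~ j) k j.
Proof.
move=> le_kn le_jn.
by rewrite /label /diagonal_arrow /= level_Cpq // logn_card_Cpq // !dvdn_q_card_Cpq.
Qed.

Lemma labelP k x j z : (Cpq k x, Cpq j z) \in S -> k <= j -> j <= n -> (k < j) || ~~ x && z ->
  let r := label (Cpq k x, Cpq j z) in
  [/\ ~~ x && z, ~ diag_at (arrows_from k.+1) k & r = n.+1]
  \/ [/\ k < r <= j, reach (arrows_from k.+1) r j,
         forall w, k < w < r -> ~ reach (arrows_from k.+1) w j
       & ~~ x && z -> diag_at (arrows_from k.+1) k].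
Proof.
move=> sS le_kj le_jn nid /=; have le_kn := leq_trans le_kj le_jn.
rewrite label_Cpq //.
have least (lt_kj : k < j) :=
  least_aboveP (R := reach (arrows_from k.+1) ^~ j) lt_kj (reach_refl _ _).
case: asboolP => [diag_k | ndiag_k]; rewrite ?andbF ?andbT /=.
  have lt_kj : k < j.
    case/orP: nid => // /andP[/negbTE x0 z1]; rewrite ltn_neqAle le_kj andbT.
    apply/eqP => ekj; subst j; move: sS; rewrite x0 z1 => sS.
    by apply: (S_irr sS); apply: generated_mono diag_k; apply: arrows_from_succ_setD1.
  have [lt_kr le_rj reach_r min_r] := least lt_kj.
  by right; split; [rewrite lt_kr | exact: reach_r | exact: min_r | ].
case: (boolP (~~ x && z)) => [diag | ndiag]; first by left.
have lt_kj : k < j by move: nid; rewrite (negbTE ndiag) orbF.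
have [lt_kr le_rj reach_r min_r] := least lt_kj.
by right; split; [rewrite lt_kr | exact: reach_r | exact: min_r | ].
Qed.

Lemma label_reached s : s \in S -> P s -> reached (level s) (label s).
Proof.
move=> sS Ps; have [k [x [j [z [def_s /andP[le_kj le_jn] _ nid]]]]] := S_coord sS.
subst s; have le_kn := leq_trans le_kj le_jn; rewrite level_Cpq //.
have gen_s := generated_mem (G := G) (mem_arrows_from sS Ps le_kn); have [tgt_y _ _] := P_adm.
case: (labelP sS le_kj le_jn nid) => [[/andP[/negbTE x0 z1] _ ->] | [/andP[lt_kr le_rj] _ _ _]].
  right; split=> //; exists k; first by rewrite leqnn.
  by move: gen_s; rewrite x0 z1; apply: diag_at_restr (leqnn k) le_kj le_jn.
left; split; first exact: leq_trans le_rj le_jn.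
exists k; first by rewrite leqnn.
exists (x && y); first by case: (x).
have le_yz : y <= z by have := tgt_y _ Ps; rewrite /= dvdn_q_card_Cpq.
exact: generated_restr_above (ltnW lt_kr) le_rj le_jn le_yz gen_s.
Qed.

Lemma label_not_reached s : s \in S -> P s -> ~ reached (level s).+1 (label s).
Proof.
move=> sS Ps; have [k [x [j [z [def_s /andP[le_kj le_jn] _ nid]]]]] := S_coord sS.
subst s; have le_kn := leq_trans le_kj le_jn; rewrite level_Cpq //.
case: (labelP sS le_kj le_jn nid) => [[_ ndiag_k ->] | [/andP[lt_kr le_rj] reach_r min_r _]].
  case=> [[le_Sn _] | [_ [u /andP[lt_ku le_un] diag_u]]]; first by rewrite ltnn in le_Sn.
  exact/ndiag_k/(diag_at_restr (ltnW lt_ku) (leqnn u) le_un).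
case=> [[_ [u /andP[lt_ku lt_ur] reach_ur]] | [e_r _]].
  apply: (min_r u); first by rewrite lt_ku.
  exact: reach_trans (ltnW lt_ur) le_rj le_jn reach_ur reach_r.
by move: (leq_trans le_rj le_jn); rewrite e_r ltnn.
Qed.

Lemma label_le s : s \in S -> P s -> label s <= n + hb.
Proof.
move=> sS Ps; have [k [x [j [z [def_s /andP[le_kj le_jn] _ nid]]]]] := S_coord sS.
subst s; have [_ diag_hb _] := P_adm.
case: (labelP sS le_kj le_jn nid) => [[diag _ ->] | [/andP[_ le_rj] _ _ _]].
  by rewrite (diag_hb _ Ps) ?addn1 // /diagonal_arrow /= !dvdn_q_card_Cpq ?(leq_trans le_kj).
by rewrite (leq_trans le_rj) ?(leq_trans le_jn) ?leq_addr.
Qed.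

Lemma label_collision k j0 x1 j1 z1 r :
  (Cpq k false, Cpq j0 y) \in S -> (Cpq k x1, Cpq j1 z1) \in S -> P (Cpq k x1, Cpq j1 z1) ->
  (Cpq k x1, Cpq j1 z1) != (Cpq k false, Cpq j0 y) ->
  k <= r -> r <= j0 -> r <= j1 -> j0 <= n -> j1 <= n ->
  reach (arrows_from k.+1) r j0 -> (y -> diag_at (arrows_from k.+1) k) -> False.
Proof.
move=> s0S s1S Ps1 ne_s10 le_kr le_rj0 le_rj1 le_j0n le_j1n reach_r diag_k.
set Y := S :\ (Cpq k false, Cpq j0 y).
have sEY : arrows_from k.+1 \subset Y.
  by apply: arrows_from_succ_setD1; rewrite (leq_trans le_kr) // (leq_trans le_rj0).
have s1Y : (Cpq k x1, Cpq j1 z1) \in Y by rewrite !inE ne_s10 s1S.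
have [tgt_y _ _] := P_adm.
have le_yz1 : y <= z1 by have := tgt_y _ Ps1; rewrite /= dvdn_q_card_Cpq.
have gen_r : generated G Y (Cpq k false, Cpq r y).
  have := generated_restr_above le_kr le_rj1 le_j1n le_yz1 (generated_mem (G := G) s1Y).
  case: (boolP (x1 && y)) => [x1y | _] gen_1; last exact: gen_1.
  exact: generated_trans (generated_mono sEY (diag_k (andP x1y).2)) gen_1.
have [x' le_x'0 gen_s0] := reach_comp le_kr le_rj0 le_j0n gen_r (reach_mono sEY reach_r).
by apply: (S_irr s0S); case: x' le_x'0 gen_s0.
Qed.

Lemma label_inj_level s s' : s \in S -> P s -> s' \in S -> P s' ->
  level s = level s' -> label s = label s' -> s = s'.
Proof.
move=> sS Ps s'S Ps'.
have [k [x [j [z [def_s /andP[le_kj le_jn] le_xz nid]]]]] := S_coord sS.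
have [k' [x' [j' [z' [def_s' /andP[le_kj' le_jn'] _ nid']]]]] := S_coord s'S.
subst s s'.
rewrite !level_Cpq ?(leq_trans le_kj) ?(leq_trans le_kj') // => e_k; subst k'.
have [-> // | ne_ss' eq_label] := eqVneq (Cpq k x, Cpq j z) (Cpq k x', Cpq j' z'); exfalso.
have same_heights : x = x' -> z = z' -> False.
  move=> ex ez; subst x' z'; move: ne_ss'.
  by rewrite (same_source sS s'S le_xz le_kj le_kj' le_jn le_jn') eqxx.
have [_ _ heightsP] := P_adm.
case: (labelP sS le_kj le_jn nid)
  => [[/andP[/negbTE x0 z1] _ e] | [/andP[lt_kr le_rj] reach_r _ diag_r]];
case: (labelP s'S le_kj' le_jn' nid')
  => [[/andP[/negbTE x0' z1'] _ e'] | [/andP[_ le_rj'] reach_r' _ diag_r']].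
- by apply: same_heights; rewrite ?x0 ?x0' ?z1 ?z1'.
- by move: (leq_trans le_rj' le_jn'); rewrite -eq_label e ltnn.
- by move: (leq_trans le_rj le_jn); rewrite eq_label e' ltnn.
move: le_rj' reach_r'; rewrite -eq_label => le_rj' reach_r'.
have heights_cases :
    (x, z) != (x', z') -> ((x, z) == (false, y)) || ((x', z') == (false, y)).
  have := heightsP _ _ Ps Ps'.
  by rewrite /heights /= !dvdn_q_card_Cpq ?(leq_trans le_kj) ?(leq_trans le_kj').
have [[ex ez] | /heights_cases /orP[/eqP[ex ez] | /eqP[ex ez]]] := eqVneq (x, z) (x', z').
- exact: same_heights.
- subst x z; rewrite eq_sym in ne_ss'.
  exact: label_collision sS s'S Ps' ne_ss' (ltnW lt_kr) le_rj le_rj' le_jn le_jn' reach_r diag_r.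
- subst x' z'.
  exact: label_collision s'S sS Ps ne_ss' (ltnW lt_kr) le_rj' le_rj le_jn' le_jn reach_r' diag_r'.
Qed.

Lemma label_inj : {in [set s in S | P s] &, injective label}.
Proof.
have label_neq s s' : s \in S -> P s -> s' \in S -> P s' -> level s < level s' ->
    label s != label s'.
  move=> sS Ps s'S Ps' lt_ss'; apply/eqP => eq_label; apply: (label_not_reached sS Ps).
  by rewrite eq_label; apply: reached_mono lt_ss' (label_reached s'S Ps').
move=> s s'; rewrite !inE => /andP[sS Ps] /andP[s'S Ps'] eq_label.
case: (ltngtP (level s) (level s')) => [lt_ss' | lt_s's | ].
- by move: (label_neq _ _ sS Ps s'S Ps' lt_ss'); rewrite eq_label eqxx.
- by move: (label_neq _ _ s'S Ps' sS Ps lt_s's); rewrite eq_label eqxx.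
by move/label_inj_level; apply.
Qed.

Local Notation SP := [set s in S | P s].

Lemma uniq_labels : uniq [seq label s | s <- enum SP].
Proof. by rewrite map_inj_in_uniq ?enum_uniq // => s s'; rewrite !mem_enum; apply: label_inj. Qed.

Lemma labels_sub_iota : {subset [seq label s | s <- enum SP] <= iota 1 (n + hb)}.
Proof.
move=> v /mapP[s]; rewrite mem_enum inE => /andP[sS Ps] ->.
by rewrite mem_iota add1n ltnS label_le ?(reached_gt0 (label_reached sS Ps)).
Qed.

Theorem card_arrows_le : #|SP| <= n + hb.
Proof.
rewrite cardE -(size_map label) -(size_iota 1 (n + hb)).
exact: uniq_leq_size uniq_labels labels_sub_iota.
Qed.

Lemma reached_of_card_eq : #|SP| = n + hb -> forall v, 0 < v <= n + hb -> reached 0 v.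
Proof.
move=> card_SP v v_range.
have size_labels : size (iota 1 (n + hb)) <= size [seq label s | s <- enum SP].
  by rewrite size_map size_iota -cardE card_SP.
have [_ labels_eq] := uniq_min_size uniq_labels labels_sub_iota size_labels.
have : v \in iota 1 (n + hb) by rewrite mem_iota add1n ltnS.
rewrite -labels_eq => /mapP[s].
rewrite mem_enum inE => /andP[sS Ps] ->.
exact: reached_mono (leq0n _) (label_reached sS Ps).
Qed.

Lemma reach_of_reached : (forall v, 0 < v <= n -> reached 0 v) -> reach (arrows_from 0) 0 n.
Proof.
move=> reached_all; suff: forall v, v <= n -> reach (arrows_from 0) 0 v by apply.
elim/ltn_ind => v IHv le_vn; have [-> | v_gt0] := posnP v; first exact: reach_refl.
case: (reached_all v); first by rewrite v_gt0.
  case=> _ [u /andP[_ lt_uv] reach_uv].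
  have reach_0u := IHv u lt_uv (ltnW (leq_trans lt_uv le_vn)).
  exact: reach_trans (leq0n u) (ltnW lt_uv) le_vn reach_0u reach_uv.
by case=> e_v; rewrite e_v ltnn in le_vn.
Qed.

Theorem card_arrows_eq : #|SP| = n + hb -> (y -> hb) ->
  generated G S (Cpq 0 false, Cpq n y).
Proof.
move=> card_SP y_hb; have reached_all := reached_of_card_eq card_SP.
have [x le_xy gen_0n] : reach (arrows_from 0) 0 n.
  apply: reach_of_reached => v /andP[v_gt0 le_vn].
  by apply: reached_all; rewrite v_gt0 (leq_trans le_vn) ?leq_addr.
apply: generated_mono (arrows_from_sub 0) _; case: x le_xy gen_0n => // le_1y gen_0n.
have hb_true : hb by apply: y_hb; case: (y) le_1y.
have [[le_Sn _] | [_ [u /andP[_ le_un] diag_u]]] : reached 0 n.+1.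
  by apply: reached_all; rewrite hb_true addn1 leqnn.
  by rewrite ltnn in le_Sn.
exact: generated_trans (diag_at_restr (leq0n u) (leqnn u) le_un diag_u) gen_0n.
Qed.

End Counting.

End IrredundantArrows.

End CyclicSubgroups.

Theorem lemma6p3 (gT : finGroupType) (G : {group gT}) (p q n : nat)
  (T S : {set arrow gT}) :
  prime p -> prime q -> p != q -> 0 < n ->
  cyclic G -> #|G| = (p ^ n * q)%N ->
  transfer_system G T -> minimal_generating_set G S T ->
  let nT := #|[set a in S | top_arrow q a]| in
  let nB := #|[set a in S | bottom_arrow q a]| in
  let nD := #|[set a in S | diagonal_arrow q a]| in
  [/\ nT + nB <= n /\
        (nT + nB = n -> forall P : {group gT}, P \subset G -> #|P| = (p ^ n)%N ->
           (1%G, P) \in T),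
      nT + nD <= n.+1 /\ (nT + nD = n.+1 -> (1%G, G) \in T) &
      nB + nD <= n.+1 /\
        (nB + nD = n.+1 -> forall P : {group gT}, P \subset G -> #|P| = (p ^ n)%N ->
           (1%G, P) \in T)].
Proof.
move=> p_pr q_pr pq_neq _ cycG oG _ mgs nT nB nD.
have [g defG] := cyclicP cycG; have [S_arrow S_T _] := mgs.
have S_irr := minimal_generating_set_irredundant mgs.
have card_le := card_arrows_le p_pr q_pr pq_neq oG defG S_arrow S_irr.
have card_eq := card_arrows_eq p_pr q_pr pq_neq oG defG S_arrow S_irr.
have TB := top_bottom_admissible gT q; have TD := top_diagonal_admissible gT q.
have BD := bottom_diagonal_admissible gT q.
rewrite /nT /nB /nD (card_sep_or _ (@top_bottom_disjoint gT q)).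
rewrite (card_sep_or _ (@top_diagonal_disjoint gT q)).
rewrite (card_sep_or _ (@bottom_diagonal_disjoint gT q)).
rewrite (Cpq1 p_pr q_pr pq_neq oG defG) [X in (_, X) \in T](CpqG p_pr q_pr pq_neq oG defG).
have to_Cpq_n (P : {group gT}) : P \subset G -> #|P| = (p ^ n)%N -> P = Cpq G p q g n false.
  move=> sPG oP; exact: (subgroup_pn_Cpq p_pr q_pr pq_neq oG defG sPG oP).
split; split.
- by rewrite -[n]addn0; apply: card_le TB.
- by move=> eq_TB P sPG /(to_Cpq_n _ sPG) ->; apply/S_T/(card_eq _ _ _ TB); rewrite ?addn0.
- by rewrite -addn1; apply: card_le TD.
- by move=> eq_TD; apply/S_T/(card_eq _ _ _ TD); rewrite ?addn1.
- by rewrite -addn1; apply: card_le BD.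
- by move=> eq_BD P sPG /(to_Cpq_n _ sPG) ->; apply/S_T/(card_eq _ _ _ BD); rewrite ?addn1.
Qed.
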